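(* For real $0<y<2\pi$, $$\sum_{n=0}^{\infty} (-1)^n B_n R_n(y)=e^{y}\left(y\ln(1-e^{-y})-\mathrm{Li}_2(e^{-y})+\frac{\pi^2}{6}\right).$$
   Context: For an integer $n\ge 0$ and complex $y$, $R_n(y)=e^y-1-\frac{y}{1!}-\frac{y^2}{2!}-\dots-\frac{y^n}{n!}=e^y-\sum_{k=0}^n\frac{y^k}{k!}$. $B_n$ are the Bernoulli numbers, defined by $\frac{z}{e^z-1}=\sum_{n\ge0}B_n\frac{z^n}{n!}$ ($|z|<2\pi$). $\mathrm{Li}_2(z)=\sum_{n\ge1}\frac{z^n}{n^2}$ is the dilogarithm. *)

From Stdlib Require Import Reals.
From Coquelicot Require Import Coquelicot.
Open Scope R_scope.

(* R_n(y) = e^y - sum_{k=0}^n y^k/k!  (sum_f_R0 f n = f 0 + ... + f n) *)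
Definition Rrem (n : nat) (y : R) : R :=
  exp y - sum_f_R0 (fun k => y ^ k / INR (Factorial.fact k)) n.

(* The generating-function definition of the Bernoulli numbers:
   z/(e^z-1) = sum_{n>=0} B_n z^n/n! for 0 < |z| < 2 pi
   (real z; this determines the sequence uniquely, and coincides with the
   complex definition on the real axis). *)
Definition is_Bernoulli (B : nat -> R) : Prop :=
  forall z : R, z <> 0 -> Rabs z < 2 * PI ->
    is_series (fun n => B n * z ^ n / INR (Factorial.fact n)) (z / (exp z - 1)).

Definition Li2 (x : R) : R :=
  Series (fun n : nat => x ^ (S n) / (INR (S n)) ^ 2).

From Stdlib Require Import Reals Lra Lia.
From Coquelicot Require Import Coquelicot.
Open Scope R_scope.

(* Put a_n = (-1)^n B_n / n!; by the defining generating function,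
   F(t) = sum_n a_n t^n = t / (1 - e^{-t}) for 0 < t < 2 pi, so this power series
   converges (absolutely and uniformly) on [0, y].  Taylor's formula with integral
   remainder gives R_n(y) = int_0^y e^{y-t} t^n / n! dt, hence the N-th partial sum
   of sum (-1)^n B_n R_n(y) is int_0^y e^{y-t} (sum_{n<=N} a_n t^n) dt, and these
   integrals converge to e^y int_0^y e^{-t} F(t) dt.  On (0, y] the integrand
   e^{-t} F(t) = t e^{-t} / (1 - e^{-t}) is the derivative of
   G(t) = t ln(1 - e^{-t}) - Li_2(e^{-t}), and G(t) -> -Li_2(1) = -pi^2/6 as t -> 0+
   (Abel's theorem for the dilogarithm series), which yields G(y) + pi^2/6.
   The file proceeds in this order: calculus toolkit; the Basel problem
   sum 1/n^2 = pi^2/6 (Matsuoka's proof with the integrals int cos^k and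
   int x^2 cos^k on [0, pi/2]); the dilogarithm (power series, derivative,
   limit at 1); the antiderivative G near 0; the remainder integral; term-by-term
   integration of power series; the Bernoulli series and the theorem. *)

Lemma continuous_of_ex_derive (f : R -> R) (x : R) :
  ex_derive f x -> continuous f x.
Proof. apply (@ex_derive_continuous R_AbsRing R_NormedModule). Qed.

Lemma continuous_mult_R (f g : R -> R) (x : R) :
  continuous f x -> continuous g x -> continuous (fun t => f t * g t) x.
Proof. apply (continuous_mult f g). Qed.

Lemma ex_RInt_of_continuous (f : R -> R) (a b : R) :
  (forall z, Rmin a b <= z <= Rmax a b -> continuous f z) -> ex_RInt f a b.
Proof. apply (@ex_RInt_continuous R_CompleteNormedModule). Qed.

Lemma is_RInt_antiderivative (F f : R -> R) (a b : R) : a <= b ->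
  (forall x, a <= x <= b -> is_derive F x (f x)) ->
  (forall x, a <= x <= b -> continuous f x) ->
  is_RInt f a b (F b - F a).
Proof.
  intros Hab HF Hf.
  apply (@is_RInt_derive R_CompleteNormedModule); rewrite Rmin_left, Rmax_right by lra;
    assumption.
Qed.

Lemma is_RInt_ext_R (f g : R -> R) (a b l : R) :
  (forall x, f x = g x) -> is_RInt f a b l -> is_RInt g a b l.
Proof. intros Hfg Hf. apply (is_RInt_ext f g); [intros; apply Hfg | exact Hf]. Qed.

Lemma is_series_ext_R (a b : nat -> R) (l : R) :
  (forall n, a n = b n) -> is_series a l -> is_series b l.
Proof. intros Hab Ha. apply (is_series_ext a b); [intro; apply Hab | exact Ha]. Qed.

Lemma is_RInt_value_unique (f : R -> R) (a b l1 l2 : R) :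
  is_RInt f a b l1 -> is_RInt f a b l2 -> l1 = l2.
Proof.
  intros H1 H2.
  rewrite <- (@is_RInt_unique R_CompleteNormedModule f a b l1 H1).
  exact (@is_RInt_unique R_CompleteNormedModule f a b l2 H2).
Qed.

Lemma is_lim_seq_of_error_bound (u v : nat -> R) (l : R) :
  (forall n, Rabs (u n - l) <= v n) -> is_lim_seq v 0 -> is_lim_seq u l.
Proof.
  intros H Hv. apply (is_lim_seq_le_le (fun n => l - v n) u (fun n => l + v n)).
  - intro n; specialize (H n); apply Rabs_le_between in H; lra.
  - replace (Finite l) with (Finite (l - 0)) by (f_equal; ring).
    apply is_lim_seq_minus'; [apply is_lim_seq_const | exact Hv].
  - replace (Finite l) with (Finite (l + 0)) by (f_equal; ring).
    apply is_lim_seq_plus'; [apply is_lim_seq_const | exact Hv].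
Qed.

Lemma INR_S_pos (n : nat) : 0 < INR (S n).
Proof. apply lt_0_INR; lia. Qed.

Lemma fact_pos (n : nat) : 0 < INR (Factorial.fact n).
Proof. apply lt_0_INR, Factorial.lt_O_fact. Qed.

(* The unfolded form of INR (S k) produced by derivative computations. *)
Lemma INR_S_match (k : nat) :
  match k with 0%nat => 1 | S _ => INR k + 1 end = INR (S k).
Proof. destruct k; [simpl; ring | rewrite (S_INR (S k)); reflexivity]. Qed.

Lemma is_lim_seq_inv_S : is_lim_seq (fun n => / INR (S n)) 0.
Proof.
  replace (Finite 0) with (Rbar_inv p_infty) by reflexivity.
  apply is_lim_seq_inv; [|discriminate].
  apply (is_lim_seq_incr_1 INR p_infty), is_lim_seq_INR.
Qed.

Lemma PI2_ge_0 : 0 <= PI / 2.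
Proof. left; apply PI2_RGT_0. Qed.

Definition wallis (k : nat) : R := RInt (fun x => cos x ^ k) 0 (PI / 2).
Definition wallis_sq (k : nat) : R := RInt (fun x => x ^ 2 * cos x ^ k) 0 (PI / 2).

Lemma wallis_correct (k : nat) :
  is_RInt (fun x => cos x ^ k) 0 (PI / 2) (wallis k).
Proof.
  apply (@RInt_correct R_CompleteNormedModule), ex_RInt_of_continuous.
  intros; apply continuous_of_ex_derive; auto_derive; auto.
Qed.

Lemma wallis_sq_correct (k : nat) :
  is_RInt (fun x => x ^ 2 * cos x ^ k) 0 (PI / 2) (wallis_sq k).
Proof.
  apply (@RInt_correct R_CompleteNormedModule), ex_RInt_of_continuous.
  intros; apply continuous_of_ex_derive; auto_derive; auto.
Qed.

(* Integrating (sin x cos^{k+1} x)' = (k+2) cos^{k+2} x - (k+1) cos^k x. *)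
Lemma wallis_rec (k : nat) :
  INR (S (S k)) * wallis (S (S k)) = INR (S k) * wallis k.
Proof.
  assert (Hlin : is_RInt (fun x => INR (S (S k)) * cos x ^ S (S k) - INR (S k) * cos x ^ k)
                   0 (PI / 2) (INR (S (S k)) * wallis (S (S k)) - INR (S k) * wallis k)).
  { apply (is_RInt_minus (fun x => INR (S (S k)) * cos x ^ S (S k)));
      apply (is_RInt_scal (fun x => cos x ^ _)); apply wallis_correct. }
  assert (Hftc : is_RInt (fun x => INR (S (S k)) * cos x ^ S (S k) - INR (S k) * cos x ^ k)
                   0 (PI / 2) (sin (PI / 2) * cos (PI / 2) ^ S k - sin 0 * cos 0 ^ S k)).
  { apply (is_RInt_antiderivative (fun x => sin x * cos x ^ S k)); [apply PI2_ge_0| |].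
    - intros x _. auto_derive; auto. rewrite INR_S_match.
      assert (Hs : sin x ^ 2 = 1 - cos x ^ 2)
        by (generalize (sin2_cos2 x); unfold Rsqr; simpl; lra).
      rewrite !S_INR, <- !tech_pow_Rmult. ring_simplify. rewrite Hs. ring.
    - intros; apply continuous_of_ex_derive; auto_derive; auto. }
  assert (H := is_RInt_value_unique _ _ _ _ _ Hlin Hftc).
  rewrite cos_PI2, sin_0, pow_i in H by lia. lra.
Qed.

(* Integrating (x cos^{k+2} x + (k+2)/2 x^2 sin x cos^{k+1} x)'. *)
Lemma wallis_sq_rec (k : nat) :
  wallis (S (S k)) + INR (S (S k)) ^ 2 / 2 * wallis_sq (S (S k))
  = INR (S (S k)) * INR (S k) / 2 * wallis_sq k.
Proof.
  set (c := INR (S (S k)) ^ 2 / 2). set (d := INR (S (S k)) * INR (S k) / 2).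
  assert (Hlin : is_RInt (fun x => cos x ^ S (S k) + c * (x ^ 2 * cos x ^ S (S k))
                                   - d * (x ^ 2 * cos x ^ k))
                   0 (PI / 2)
                   (wallis (S (S k)) + c * wallis_sq (S (S k)) - d * wallis_sq k)).
  { apply (is_RInt_minus (fun x => cos x ^ S (S k) + c * (x ^ 2 * cos x ^ S (S k)))).
    - apply (is_RInt_plus (fun x => cos x ^ S (S k))); [apply wallis_correct|].
      apply (is_RInt_scal (fun x => x ^ 2 * cos x ^ _)); apply wallis_sq_correct.
    - apply (is_RInt_scal (fun x => x ^ 2 * cos x ^ _)); apply wallis_sq_correct. }
  set (F := fun x => x * cos x ^ S (S k)
                     + INR (S (S k)) / 2 * (x ^ 2 * (sin x * cos x ^ S k))).
  assert (Hftc : is_RInt (fun x => cos x ^ S (S k) + c * (x ^ 2 * cos x ^ S (S k))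
                                   - d * (x ^ 2 * cos x ^ k))
                   0 (PI / 2) (F (PI / 2) - F 0)).
  { apply is_RInt_antiderivative; [apply PI2_ge_0| |].
    - intros x _. unfold F, c, d. auto_derive; auto. rewrite !INR_S_match.
      assert (Hs : sin x ^ 2 = 1 - cos x ^ 2)
        by (generalize (sin2_cos2 x); unfold Rsqr; simpl; lra).
      rewrite !S_INR, <- !tech_pow_Rmult.
      replace (sin x * (1 * - sin x * ((INR k + 1) * cos x ^ k)))
        with (- sin x ^ 2 * ((INR k + 1) * cos x ^ k)) by ring.
      rewrite Hs. field.
    - intros; apply continuous_of_ex_derive; unfold c, d; auto_derive; auto. }
  assert (H := is_RInt_value_unique _ _ _ _ _ Hlin Hftc).
  unfold F in H. rewrite cos_PI2, sin_0, !pow_i in H by lia. lra.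
Qed.

(* On [0, pi/2], x cos x <= sin x, since (sin x - x cos x)' = x sin x >= 0. *)
Lemma xcos_le_sin (x : R) : 0 <= x <= PI / 2 -> x * cos x <= sin x.
Proof.
  intros Hx.
  assert (Hftc : is_RInt (fun t => t * sin t) 0 x
                   ((sin x - x * cos x) - (sin 0 - 0 * cos 0))).
  { apply (is_RInt_antiderivative (fun t => sin t - t * cos t)); [lra| |].
    - intros t _. auto_derive; auto. ring.
    - intros; apply continuous_of_ex_derive; auto_derive; auto. }
  assert (Hpos : 0 <= RInt (fun t => t * sin t) 0 x).
  { apply RInt_ge_0; [lra| eexists; exact Hftc |].
    intros t Ht. apply Rmult_le_pos; [lra | apply sin_ge_0; lra]. }
  apply (@is_RInt_unique R_CompleteNormedModule) in Hftc.
  rewrite Hftc, sin_0 in Hpos. lra.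
Qed.

(* J_{k+2} <= I_k - I_{k+2}, from x^2 cos^2 x <= sin^2 x = 1 - cos^2 x. *)
Lemma wallis_sq_bound (k : nat) :
  wallis_sq (S (S k)) <= wallis k - wallis (S (S k)).
Proof.
  assert (Hdiff : is_RInt (fun x => cos x ^ k - cos x ^ S (S k)) 0 (PI / 2)
                    (wallis k - wallis (S (S k)))).
  { apply (is_RInt_minus (fun x => cos x ^ k)); apply wallis_correct. }
  apply (@is_RInt_unique R_CompleteNormedModule) in Hdiff.
  unfold wallis_sq. rewrite <- Hdiff.
  apply RInt_le; [apply PI2_ge_0 | eexists; apply wallis_sq_correct | eexists |].
  - apply (@RInt_correct R_CompleteNormedModule), ex_RInt_of_continuous.
    intros; apply continuous_of_ex_derive; auto_derive; auto.
  - intros x Hx.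
    assert (H1 := xcos_le_sin x ltac:(lra)).
    assert (H2 : 0 <= cos x) by (apply cos_ge_0; lra).
    assert (H3 : 0 <= cos x ^ k) by (apply pow_le; auto).
    assert (Hs := sin2_cos2 x). unfold Rsqr in Hs.
    assert (0 <= x * cos x) by (apply Rmult_le_pos; lra).
    assert ((x * cos x) * (x * cos x) <= sin x * sin x) by (apply Rmult_le_compat; lra).
    replace (x ^ 2 * cos x ^ S (S k)) with ((x * cos x) * (x * cos x) * cos x ^ k)
      by (simpl; ring).
    replace (cos x ^ k - cos x ^ S (S k)) with ((sin x * sin x) * cos x ^ k)
      by (replace (sin x * sin x) with (1 - cos x * cos x) by lra; simpl; ring).
    apply Rmult_le_compat_r; auto.
Qed.

Lemma wallis_0 : wallis 0 = PI / 2.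
Proof.
  unfold wallis. simpl pow. rewrite RInt_const. unfold scal; simpl; unfold mult; simpl.
  ring.
Qed.

Lemma wallis_sq_0 : wallis_sq 0 = (PI / 2) ^ 3 / 3.
Proof.
  assert (H : is_RInt (fun x => x ^ 2 * cos x ^ 0) 0 (PI / 2)
                ((PI / 2) ^ 3 / 3 - 0 ^ 3 / 3)).
  { apply (is_RInt_antiderivative (fun x => x ^ 3 / 3)); [apply PI2_ge_0| |].
    - intros x _. auto_derive; auto. simpl; field.
    - intros; apply continuous_of_ex_derive; auto_derive; auto. }
  rewrite (is_RInt_value_unique _ _ _ _ _ (wallis_sq_correct 0) H). simpl; field.
Qed.

Lemma wallis_even_pos (m : nat) : 0 < wallis (2 * m).
Proof.
  induction m as [|m IH].
  - change (2 * 0)%nat with 0%nat. rewrite wallis_0. generalize PI_RGT_0; lra.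
  - replace (2 * S m)%nat with (S (S (2 * m))) by lia.
    assert (H := wallis_rec (2 * m)).
    assert (H1 := INR_S_pos (S (2 * m))). assert (H2 := INR_S_pos (2 * m)).
    apply (Rmult_lt_reg_l (INR (S (S (2 * m))))); [lra|].
    rewrite H, Rmult_0_r. apply Rmult_lt_0_compat; lra.
Qed.

Lemma wallis_sq_nonneg (k : nat) : 0 <= wallis_sq k.
Proof.
  apply RInt_ge_0; [apply PI2_ge_0 | eexists; apply wallis_sq_correct |].
  intros x Hx. apply Rmult_le_pos; [apply pow2_ge_0 | apply pow_le, cos_ge_0; lra].
Qed.

Definition matsuoka (m : nat) : R := wallis_sq (2 * m) / wallis (2 * m).

(* The recurrences make 1/(m+1)^2 a telescoping difference of K. *)
Lemma matsuoka_telescope (m : nat) :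
  / INR (S m) ^ 2 = 2 * (matsuoka m - matsuoka (S m)).
Proof.
  unfold matsuoka. replace (2 * S m)%nat with (S (S (2 * m))) by lia.
  assert (Hp1 := wallis_even_pos m). assert (Hp2 := wallis_even_pos (S m)).
  replace (2 * S m)%nat with (S (S (2 * m))) in Hp2 by lia.
  assert (H1 := wallis_rec (2 * m)). assert (H2 := wallis_sq_rec (2 * m)).
  rewrite !S_INR, mult_INR in H1, H2. rewrite S_INR.
  replace (INR 2) with 2 in H1, H2 by (simpl; ring).
  set (a := wallis (2 * m)) in *. set (b := wallis (S (S (2 * m)))) in *.
  set (J := wallis_sq (2 * m)) in *. set (J' := wallis_sq (S (S (2 * m)))) in *.
  assert (0 <= INR m) by apply pos_INR.
  assert (Hb : b = (2 * INR m + 1) / (2 * INR m + 1 + 1) * a).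
  { apply (Rmult_eq_reg_l (2 * INR m + 1 + 1)); [|lra]. rewrite H1. field. lra. }
  assert (HJ : J' = ((2 * INR m + 1 + 1) * (2 * INR m + 1) / 2 * J - b) * 2
                    / (2 * INR m + 1 + 1) ^ 2).
  { apply (Rmult_eq_reg_l ((2 * INR m + 1 + 1) ^ 2 / 2)); [|nra].
    field_simplify; [|lra]. lra. }
  rewrite HJ, Hb. field. repeat split; lra.
Qed.

(* From J_{2m+2} <= I_{2m} - I_{2m+2} = I_{2m+2}/(2m+1): 0 <= K_{m+1} <= 1/(m+1). *)
Lemma matsuoka_bound (m : nat) : 0 <= matsuoka (S m) <= / INR (S m).
Proof.
  unfold matsuoka. replace (2 * S m)%nat with (S (S (2 * m))) by lia.
  assert (Hp1 := wallis_even_pos m). assert (Hp2 := wallis_even_pos (S m)).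
  replace (2 * S m)%nat with (S (S (2 * m))) in Hp2 by lia.
  assert (H1 := wallis_rec (2 * m)). assert (H3 := wallis_sq_bound (2 * m)).
  assert (H4 := wallis_sq_nonneg (S (S (2 * m)))).
  rewrite !S_INR, mult_INR in H1. rewrite S_INR.
  replace (INR 2) with 2 in H1 by (simpl; ring).
  set (a := wallis (2 * m)) in *. set (b := wallis (S (S (2 * m)))) in *.
  set (J' := wallis_sq (S (S (2 * m)))) in *.
  assert (0 <= INR m) by apply pos_INR.
  assert (E : a - b = b / (2 * INR m + 1)).
  { apply (Rmult_eq_reg_l (2 * INR m + 1)); [field_simplify; lra | lra]. }
  split; [apply Rdiv_le_0_compat; lra|].
  apply Rle_trans with ((b / (2 * INR m + 1)) / b).
  - unfold Rdiv. apply Rmult_le_compat_r; [left; apply Rinv_0_lt_compat|]; lra.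
  - replace (b / (2 * INR m + 1) / b) with (/ (2 * INR m + 1)) by (field; lra).
    apply Rinv_le_contravar; lra.
Qed.

Lemma matsuoka_0 : matsuoka 0 = PI ^ 2 / 12.
Proof.
  unfold matsuoka. simpl (2 * 0)%nat. rewrite wallis_0, wallis_sq_0.
  field. generalize PI_RGT_0; lra.
Qed.

Theorem basel : is_series (fun n => / INR (S n) ^ 2) (PI ^ 2 / 6).
Proof.
  assert (Hpartial : forall N, sum_f_R0 (fun n => / INR (S n) ^ 2) N
                               = 2 * (matsuoka 0 - matsuoka (S N))).
  { induction N as [|N IH].
    - exact (matsuoka_telescope 0).
    - rewrite tech5, IH, (matsuoka_telescope (S N)). ring. }
  apply (is_lim_seq_of_error_bound _ (fun n => 2 * / INR (S n))).
  - intro n. rewrite sum_n_Reals, Hpartial, matsuoka_0.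
    destruct (matsuoka_bound n). rewrite Rabs_left1; lra.
  - replace (Finite 0) with (Rbar_mult 2 0) by (simpl; f_equal; ring).
    apply is_lim_seq_scal_l, is_lim_seq_inv_S.
Qed.

(* Coefficients 1/(n+1)^2 of Li_2(x)/x and 1/(n+1) of -ln(1-x)/x. *)
Definition inv_sq (n : nat) : R := / INR (S n) ^ 2.
Definition inv_succ (n : nat) : R := / INR (S n).

(* The ratio of consecutive coefficients (n+1)^2/(n+2)^2 tends to 1, so the
   dilogarithm series has radius of convergence exactly 1. *)
Lemma radius_inv_sq : CV_radius inv_sq = 1.
Proof.
  rewrite (CV_radius_finite_DAlembert inv_sq 1); [f_equal; apply Rinv_1 | | lra |].
  - intro n. unfold inv_sq. apply Rinv_neq_0_compat, pow_nonzero.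
    generalize (INR_S_pos n); lra.
  - apply (is_lim_seq_ext (fun n => (1 - / INR (S (S n))) * (1 - / INR (S (S n))))).
    + intro n. unfold inv_sq. rewrite (S_INR (S n)). assert (H := INR_S_pos n).
      rewrite Rabs_pos_eq; [field; lra|].
      left; apply Rdiv_lt_0_compat; apply Rinv_0_lt_compat, pow_lt; lra.
    + assert (Hlim : is_lim_seq (fun n => 1 - / INR (S (S n))) 1).
      { replace (Finite 1) with (Finite (1 - 0)) by (f_equal; ring).
        apply is_lim_seq_minus'; [apply is_lim_seq_const|].
        apply (is_lim_seq_incr_1 (fun n => / INR (S n))), is_lim_seq_inv_S. }
      replace (Finite 1) with (Finite (1 * 1)) by (f_equal; ring).
      apply is_lim_seq_mult'; exact Hlim.
Qed.

Lemma radius_Li2 : CV_radius (PS_incr_1 inv_sq) = 1.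
Proof. rewrite CV_radius_incr_1. exact radius_inv_sq. Qed.

Lemma Li2_as_PSeries (x : R) : Li2 x = PSeries (PS_incr_1 inv_sq) x.
Proof.
  rewrite PSeries_incr_1. unfold Li2, PSeries. rewrite <- Series_scal_l.
  apply Series_ext; intro n. unfold inv_sq. rewrite <- tech_pow_Rmult.
  assert (H := INR_S_pos n). field. lra.
Qed.

Lemma PS_derive_Li2 (n : nat) : PS_derive (PS_incr_1 inv_sq) n = inv_succ n.
Proof.
  unfold PS_derive. change (PS_incr_1 inv_sq (S n)) with (inv_sq n).
  unfold inv_succ, inv_sq.
  assert (H := INR_S_pos n). field. lra.
Qed.

Lemma PS_Int_geom (n : nat) : PS_Int (fun _ => 1) n = PS_incr_1 inv_succ n.
Proof.
  destruct n as [|n]; [reflexivity|].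
  unfold PS_Int, inv_succ. simpl. field. apply Rgt_not_eq, INR_S_pos.
Qed.

Lemma radius_geom : CV_radius (fun _ : nat => 1) = 1.
Proof.
  rewrite <- CV_radius_Int, (CV_radius_ext _ _ PS_Int_geom), CV_radius_incr_1.
  rewrite <- (CV_radius_ext _ _ PS_derive_Li2), CV_radius_derive.
  exact radius_Li2.
Qed.

(* -ln(1 - x) = sum x^{n+1}/(n+1) on [0, 1), by integrating the geometric series. *)
Lemma neg_ln_PSeries (x : R) : 0 <= x < 1 ->
  PSeries (PS_incr_1 inv_succ) x = - ln (1 - x).
Proof.
  intros Hx.
  rewrite <- (PSeries_ext _ _ _ PS_Int_geom), <- RInt_PSeries
    by (rewrite radius_geom, Rabs_pos_eq by lra; simpl; lra).
  apply (@is_RInt_unique R_CompleteNormedModule).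
  apply (is_RInt_ext (fun t => / (1 - t))).
  - rewrite Rmin_left, Rmax_right by lra. intros t Ht.
    symmetry. apply is_series_unique.
    apply (is_series_ext_R (fun n => t ^ n)); [intro n; ring|].
    apply is_series_geom. rewrite Rabs_pos_eq; lra.
  - replace (- ln (1 - x)) with (- ln (1 - x) - - ln (1 - 0))
      by (rewrite Rminus_0_r, ln_1; ring).
    apply (is_RInt_antiderivative (fun t => - ln (1 - t))); [lra| |].
    + intros t Ht. auto_derive; [lra|]. field. lra.
    + intros t Ht. apply continuous_of_ex_derive. auto_derive. lra.
Qed.

Lemma Li2_derive (x : R) : 0 < x < 1 -> is_derive Li2 x (- ln (1 - x) / x).
Proof.
  intros Hx.
  apply (is_derive_ext (PSeries (PS_incr_1 inv_sq)));
    [intro t; symmetry; apply Li2_as_PSeries|].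
  replace (- ln (1 - x) / x) with (PSeries (PS_derive (PS_incr_1 inv_sq)) x).
  - apply is_derive_PSeries. rewrite radius_Li2, Rabs_pos_eq by lra. simpl; lra.
  - rewrite (PSeries_ext _ _ _ PS_derive_Li2), <- neg_ln_PSeries by lra.
    rewrite PSeries_incr_1. field. lra.
Qed.

Lemma Li2_1 : Li2 1 = PI ^ 2 / 6.
Proof.
  unfold Li2. apply is_series_unique.
  apply (is_series_ext_R (fun n => / INR (S n) ^ 2)); [|exact basel].
  intro n. rewrite pow1. field. apply Rgt_not_eq, INR_S_pos.
Qed.

(* Li_2(x) -> pi^2/6 as x -> 1-: Abel's theorem at the boundary point 1 of the
   disc of convergence, where the series converges by the Basel problem. *)
Lemma Li2_near_1 (d : R) : 0 < d ->
  exists eta, 0 < eta /\ forall x, 1 - eta < x < 1 -> Rabs (Li2 x - PI ^ 2 / 6) < d.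
Proof.
  intros Hd.
  assert (Hconv : ex_pseries (PS_incr_1 inv_sq) 1).
  { exists (scal 1 (PI ^ 2 / 6)). apply (is_pseries_incr_1 inv_sq), is_pseries_R.
    apply (is_series_ext_R (fun n => / INR (S n) ^ 2)); [|exact basel].
    intro n. rewrite pow1. symmetry. apply Rmult_1_r. }
  assert (HAbel := Abel (PS_incr_1 inv_sq)).
  rewrite radius_Li2 in HAbel.
  specialize (HAbel ltac:(simpl; lra) ltac:(simpl; auto) Hconv).
  simpl in HAbel. rewrite <- Li2_as_PSeries, Li2_1 in HAbel.
  destruct (proj1 (filterlim_locally _ _) HAbel (mkposreal d Hd)) as [eta Heta].
  exists eta. split; [apply cond_pos|].
  intros x Hx. rewrite Li2_as_PSeries.
  assert (Hball := Heta x). unfold ball in Hball; simpl in Hball.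
  unfold AbsRing_ball, abs, minus, plus, opp in Hball; simpl in Hball.
  apply Hball; [apply Rabs_lt_between'; lra | lra].
Qed.

(* G(t) = t ln(1 - e^{-t}) - Li_2(e^{-t}), an antiderivative of t e^{-t}/(1 - e^{-t}). *)
Definition antider (t : R) : R := t * ln (1 - exp (- t)) - Li2 (exp (- t)).

Lemma exp_neg_lt_1 (t : R) : 0 < t -> 0 < exp (- t) < 1.
Proof.
  intros Ht. split; [apply exp_pos|]. rewrite <- exp_0. apply exp_increasing. lra.
Qed.

Lemma exp_neg_le_1 (t : R) : 0 <= t -> exp (- t) <= 1.
Proof.
  intros Ht. destruct (Req_dec t 0) as [->|Ht0].
  - rewrite Ropp_0, exp_0. lra.
  - apply Rlt_le, exp_neg_lt_1. lra.
Qed.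

(* e^{-t} (1 + t) <= 1, i.e. 1 + t <= e^t. *)
Lemma exp_neg_mul_1_plus_le (t : R) : exp (- t) * (1 + t) <= 1.
Proof.
  rewrite exp_Ropp. apply (Rmult_le_reg_l (exp t)); [apply exp_pos|].
  rewrite <- Rmult_assoc, Rinv_r, Rmult_1_l, Rmult_1_r by (apply Rgt_not_eq, exp_pos).
  apply exp_ineq1_le.
Qed.

Lemma antider_derive (t : R) : 0 < t ->
  is_derive antider t (t * exp (- t) / (1 - exp (- t))).
Proof.
  intros Ht. assert (He := exp_neg_lt_1 t Ht).
  assert (Hlog : is_derive (fun s => s * ln (1 - exp (- s))) t
                   (ln (1 - exp (- t)) + t * (exp (- t) / (1 - exp (- t))))).
  { auto_derive; [lra|]. replace (1 + - exp (- t)) with (1 - exp (- t)) by ring.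
    field. lra. }
  assert (Hexp : is_derive (fun s => exp (- s)) t (- exp (- t))).
  { auto_derive; auto. ring. }
  assert (HLi := is_derive_comp Li2 (fun s => exp (- s)) t _ _ (Li2_derive _ He) Hexp).
  assert (H := is_derive_minus _ _ t _ _ Hlog HLi).
  replace (t * exp (- t) / (1 - exp (- t))) with
    (minus (ln (1 - exp (- t)) + t * (exp (- t) / (1 - exp (- t))))
           (scal (- exp (- t)) (- ln (1 - exp (- t)) / exp (- t)))); [exact H|].
  unfold minus, plus, opp, scal; simpl; unfold mult; simpl. field. lra.
Qed.

(* ln u < u, since e^u >= 1 + u. *)
Lemma ln_lt_self (u : R) : 0 < u -> ln u < u.
Proof.
  intros Hu. rewrite <- (ln_exp u) at 2. apply ln_increasing; [exact Hu|].
  generalize (exp_ineq1_le u); lra.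
Qed.

(* For 0 < e <= 1 we have e/2 <= 1 - e^{-e} < 1, hence the logarithmic part of G
   is O(sqrt e): |e ln(1 - e^{-e})| <= e ln(2/e) <= 2 sqrt(2 e). *)
Lemma xlog_bound (e : R) : 0 < e <= 1 ->
  Rabs (e * ln (1 - exp (- e))) <= 2 * sqrt (2 * e).
Proof.
  intros He. assert (Hexp := exp_neg_lt_1 e ltac:(lra)).
  assert (Hlow : e / 2 <= 1 - exp (- e)).
  { generalize (exp_neg_mul_1_plus_le e). nra. }
  set (s := sqrt (2 / e)).
  assert (Hs : 0 < s) by (apply sqrt_lt_R0, Rdiv_lt_0_compat; lra).
  assert (Hss : s * s = 2 / e) by (apply sqrt_sqrt, Rlt_le, Rdiv_lt_0_compat; lra).
  assert (Hes : e * s = sqrt (2 * e)).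
  { replace (2 * e) with ((e * e) * (2 / e)) by (field; lra).
    rewrite sqrt_mult_alt by nra. rewrite sqrt_square by lra. reflexivity. }
  assert (Hln_neg : ln (1 - exp (- e)) < 0) by (rewrite <- ln_1; apply ln_increasing; lra).
  assert (Hln_low : - ln (1 - exp (- e)) <= 2 * s).
  { assert (Hle : ln (e / 2) <= ln (1 - exp (- e))) by (apply ln_le; lra).
    assert (Hinv : ln (e / 2) = - ln (s * s))
      by (rewrite Hss, <- ln_Rinv by (apply Rdiv_lt_0_compat; lra); f_equal; field; lra).
    rewrite ln_mult in Hinv by lra. generalize (ln_lt_self s Hs); lra. }
  rewrite Rabs_left1 by nra. rewrite <- Hes. nra.
Qed.

Lemma antider_near_0 (d : R) : 0 < d ->
  exists t0, 0 < t0 /\ forall t, 0 < t <= t0 -> Rabs (antider t + PI ^ 2 / 6) <= d.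
Proof.
  intros Hd. destruct (Li2_near_1 (d / 2)) as [eta [Heta HLi]]; [lra|].
  set (t0 := Rmin 1 (Rmin (eta / 2) ((d / 4) ^ 2 / 2))).
  assert (Ht0_1 : t0 <= 1) by apply Rmin_l.
  assert (Ht0_eta : t0 <= eta / 2) by (eapply Rle_trans; [apply Rmin_r | apply Rmin_l]).
  assert (Ht0_d : t0 <= (d / 4) ^ 2 / 2)
    by (eapply Rle_trans; [apply Rmin_r | apply Rmin_r]).
  exists t0. split; [unfold t0; repeat apply Rmin_glb_lt; nra|].
  intros t [Ht0 Ht].
  assert (Hlog : Rabs (t * ln (1 - exp (- t))) <= d / 2).
  { eapply Rle_trans; [apply xlog_bound; lra|].
    assert (sqrt (2 * t) <= d / 4).
    { rewrite <- (sqrt_pow2 (d / 4)) by lra. apply sqrt_le_1_alt; lra. }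
    lra. }
  assert (HLi_t : Rabs (Li2 (exp (- t)) - PI ^ 2 / 6) < d / 2).
  { apply HLi. generalize (exp_ineq1_le (- t)) (exp_neg_lt_1 t Ht0); lra. }
  unfold antider.
  replace (t * ln (1 - exp (- t)) - Li2 (exp (- t)) + PI ^ 2 / 6)
    with (t * ln (1 - exp (- t)) - (Li2 (exp (- t)) - PI ^ 2 / 6)) by ring.
  eapply Rle_trans; [apply Rabs_triang|]. rewrite Rabs_Ropp. lra.
Qed.

Lemma Rrem_succ (n : nat) (y : R) :
  Rrem (S n) y = Rrem n y - y ^ S n / INR (Factorial.fact (S n)).
Proof. unfold Rrem. rewrite tech5. ring. Qed.

Lemma Rrem_integral (n : nat) (y : R) : 0 <= y ->
  is_RInt (fun t => exp (y - t) * (t ^ n / INR (Factorial.fact n))) 0 y (Rrem n y).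
Proof.
  intros Hy. induction n as [|n IH].
  - replace (Rrem 0 y) with (- exp (y - y) - - exp (y - 0))
      by (unfold Rrem; simpl; rewrite Rminus_diag, exp_0, Rminus_0_r; field).
    apply (is_RInt_antiderivative (fun t => - exp (y - t))); [exact Hy| |].
    + intros x _. auto_derive; auto. replace (y + - x) with (y - x) by ring. simpl. field.
    + intros x _. apply continuous_of_ex_derive. auto_derive; auto.
  - (* integration by parts: the integrand of order n+1 is the derivative of
       -e^{y-t} t^{n+1}/(n+1)! plus the integrand of order n *)
    set (G := fun t => - exp (y - t) * (t ^ S n / INR (Factorial.fact (S n)))).
    assert (Hfn := fact_pos n). assert (HfSn := fact_pos (S n)).
    assert (Hparts : is_RInt (fun t => exp (y - t) * (t ^ S n / INR (Factorial.fact (S n)))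
                                   - exp (y - t) * (t ^ n / INR (Factorial.fact n))) 0 y
                       (G y - G 0)).
    { apply is_RInt_antiderivative; [exact Hy| |].
      - intros x _. unfold G. auto_derive; [lra|].
        rewrite INR_S_match, <- tech_pow_Rmult. replace (y + - x) with (y - x) by ring.
        change (Factorial.fact (S n)) with (S n * Factorial.fact n)%nat.
        change (Factorial.fact n + n * Factorial.fact n)%nat
          with (S n * Factorial.fact n)%nat.
        rewrite mult_INR. field. generalize (INR_S_pos n); lra.
      - intros x _. apply continuous_of_ex_derive. auto_derive. lra. }
    replace (Rrem (S n) y) with ((G y - G 0) + Rrem n y)
      by (unfold G; rewrite Rrem_succ, Rminus_diag, exp_0, pow_i by lia; field; lra).
    apply (is_RInt_ext_R (fun t => (exp (y - t) * (t ^ S n / INR (Factorial.fact (S n)))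
                                  - exp (y - t) * (t ^ n / INR (Factorial.fact n)))
                                 + exp (y - t) * (t ^ n / INR (Factorial.fact n)))).
    + intro x. ring.
    + exact (is_RInt_plus _ _ 0 y _ _ Hparts IH).
Qed.

Lemma partial_sum_integral (c : nat -> R) (y : R) (N : nat) : 0 <= y ->
  is_RInt (fun t => exp (y - t)
                    * sum_f_R0 (fun n => c n / INR (Factorial.fact n) * t ^ n) N)
    0 y (sum_f_R0 (fun n => c n * Rrem n y) N).
Proof.
  intros Hy. induction N as [|N IH].
  - assert (Hfirst := is_RInt_scal _ 0 y (c 0%nat) _ (Rrem_integral 0 y Hy)).
    refine (is_RInt_ext_R _ _ 0 y _ _ Hfirst).
    intro t. unfold scal; simpl; unfold mult; simpl. field.
  - assert (Hsum := is_RInt_plus _ _ 0 y _ _ IH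
                      (is_RInt_scal _ 0 y (c (S N)) _ (Rrem_integral (S N) y Hy))).
    refine (is_RInt_ext_R _ _ 0 y _ _ Hsum).
    intro t. unfold plus, scal; simpl; unfold mult; simpl.
    field. apply Rgt_not_eq, (fact_pos (S N)).
Qed.

Lemma Req_of_dist_le_all (u v : R) : (forall d, 0 < d -> Rabs (u - v) <= d) -> u = v.
Proof.
  intros H. destruct (Req_dec u v) as [|Hne]; [assumption|].
  assert (Hpos : 0 < Rabs (u - v)) by (apply Rabs_pos_lt; lra).
  specialize (H (Rabs (u - v) / 2) ltac:(lra)). lra.
Qed.

Lemma continuous_partial_sum (a : nat -> R) (N : nat) (t : R) :
  continuous (fun x => sum_f_R0 (fun n => a n * x ^ n) N) t.
Proof.
  apply continuous_of_ex_derive. induction N as [|N IH].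
  - simpl. auto_derive. auto.
  - apply (ex_derive_plus (fun x => sum_f_R0 (fun n => a n * x ^ n) N)
             (fun x => a (S N) * x ^ S N)); [exact IH|].
    auto_derive. auto.
Qed.

Lemma PSeries_tail_bound (a : nat -> R) (y t : R) (N : nat) :
  Rbar_lt (Rabs y) (CV_radius a) -> 0 <= t <= y ->
  Rabs (PSeries a t - sum_f_R0 (fun n => a n * t ^ n) N)
  <= Series (fun n => Rabs (a n * y ^ n)) - sum_f_R0 (fun n => Rabs (a n * y ^ n)) N.
Proof.
  intros Hy Ht.
  assert (Ht' : Rbar_lt (Rabs t) (CV_radius a)).
  { apply (Rbar_le_lt_trans _ (Rabs y)); [simpl; rewrite !Rabs_pos_eq; lra | exact Hy]. }
  apply (sum_maj1 (fun n x => a n * x ^ n)).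
  - apply is_lim_seq_Reals, (is_lim_seq_ext (sum_n (fun n => a n * t ^ n)));
      [intro; apply sum_n_Reals|].
    exact (proj1 (is_pseries_R _ _ _) (PSeries_correct a t (CV_radius_inside a t Ht'))).
  - apply is_lim_seq_Reals, (is_lim_seq_ext (sum_n (fun n => Rabs (a n * y ^ n))));
      [intro; apply sum_n_Reals|].
    apply Series_correct, CV_disk_inside, Hy.
  - intro n. rewrite !Rabs_mult, <- !RPow_abs.
    apply Rmult_le_compat_l; [apply Rabs_pos|].
    apply pow_incr. rewrite !Rabs_pos_eq; lra.
Qed.

Lemma RInt_partial_sums_cvg (a : nat -> R) (h : R -> R) (y M : R) :
  0 <= y -> Rbar_lt (Rabs y) (CV_radius a) ->
  (forall t, 0 <= t <= y -> continuous h t) ->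
  (forall t, 0 <= t <= y -> Rabs (h t) <= M) ->
  is_lim_seq (fun N => RInt (fun t => h t * sum_f_R0 (fun n => a n * t ^ n) N) 0 y)
             (RInt (fun t => h t * PSeries a t) 0 y).
Proof.
  intros Hy Hrad Hh HM.
  set (A := Series (fun n => Rabs (a n * y ^ n))).
  set (P := fun N => sum_f_R0 (fun n => Rabs (a n * y ^ n)) N).
  assert (HP : is_lim_seq P A).
  { apply (is_lim_seq_ext (sum_n (fun n => Rabs (a n * y ^ n))));
      [intro; apply sum_n_Reals|].
    apply Series_correct, CV_disk_inside, Hrad. }
  assert (Hlimit : ex_RInt (fun t => h t * PSeries a t) 0 y).
  { apply ex_RInt_of_continuous. rewrite Rmin_left, Rmax_right by lra. intros t Ht.
    apply continuous_mult_R; [apply Hh, Ht|].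
    apply continuity_pt_filterlim, PSeries_continuity.
    apply (Rbar_le_lt_trans _ (Rabs y)); [simpl; rewrite !Rabs_pos_eq; lra | exact Hrad]. }
  apply (is_lim_seq_of_error_bound _ (fun N => (y - 0) * (M * (A - P N)))).
  - intro N.
    assert (Hpoly : ex_RInt (fun t => h t * sum_f_R0 (fun n => a n * t ^ n) N) 0 y).
    { apply ex_RInt_of_continuous. rewrite Rmin_left, Rmax_right by lra. intros t Ht.
      apply continuous_mult_R; [apply Hh, Ht | apply continuous_partial_sum]. }
    set (f := fun t => h t * sum_f_R0 (fun n => a n * t ^ n) N - h t * PSeries a t).
    replace (RInt (fun t => h t * sum_f_R0 (fun n => a n * t ^ n) N) 0 y
             - RInt (fun t => h t * PSeries a t) 0 y) with (RInt f 0 y)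
      by exact (RInt_minus _ _ 0 y Hpoly Hlimit).
    apply abs_RInt_le_const; [lra | exact (ex_RInt_minus _ _ 0 y Hpoly Hlimit) |].
    intros t Ht. unfold f.
    replace (h t * sum_f_R0 (fun n => a n * t ^ n) N - h t * PSeries a t)
      with (- (h t * (PSeries a t - sum_f_R0 (fun n => a n * t ^ n) N))) by ring.
    rewrite Rabs_Ropp, Rabs_mult.
    apply Rmult_le_compat; [apply Rabs_pos | apply Rabs_pos | apply HM, Ht |].
    apply PSeries_tail_bound; assumption.
  - replace (Finite 0) with (Rbar_mult (y - 0) (Rbar_mult M (A - A)))
      by (simpl; f_equal; ring).
    apply is_lim_seq_scal_l, is_lim_seq_scal_l, is_lim_seq_minus';
      [apply is_lim_seq_const | exact HP].
Qed.

Section BernoulliGeneratingSeries.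

Variable B : nat -> R.
Hypothesis hB : is_Bernoulli B.

(* a_n = (-1)^n B_n / n!, the Taylor coefficients of F(t) = t / (1 - e^{-t}). *)
Definition bern_coef (n : nat) : R := (-1) ^ n * B n / INR (Factorial.fact n).

(* The generating function evaluated at z = -t. *)
Lemma bern_gen_series (t : R) : 0 < t < 2 * PI ->
  is_series (fun n => bern_coef n * t ^ n) (t / (1 - exp (- t))).
Proof.
  intros Ht.
  assert (H := hB (- t) ltac:(lra) ltac:(rewrite Rabs_Ropp, Rabs_pos_eq; lra)).
  assert (He := exp_neg_lt_1 t ltac:(lra)).
  replace (t / (1 - exp (- t))) with (- t / (exp (- t) - 1)) by (field; lra).
  apply (is_series_ext_R (fun n => B n * (- t) ^ n / INR (Factorial.fact n))); [|exact H].
  intro n. unfold bern_coef.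
  replace (- t) with ((-1) * t) by ring. rewrite Rpow_mult_distr.
  assert (Hf := fact_pos n). unfold Rdiv. ring.
Qed.

(* Convergence on (0, 2 pi) forces radius of convergence at least 2 pi. *)
Lemma bern_radius (x : R) : 0 <= x < 2 * PI -> Rbar_lt (Rabs x) (CV_radius bern_coef).
Proof.
  intros Hx. set (r := (x + 2 * PI) / 2).
  assert (Hr : Rbar_le r (CV_radius bern_coef)).
  { apply Rbar_not_lt_le. intro Hlt. apply (CV_disk_outside bern_coef r).
    - rewrite Rabs_pos_eq; [exact Hlt | unfold r; lra].
    - apply ex_series_lim_0. exists (r / (1 - exp (- r))).
      apply bern_gen_series. unfold r; lra. }
  apply (Rbar_lt_le_trans _ r); [|exact Hr].
  rewrite Rabs_pos_eq by lra. simpl. unfold r; lra.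
Qed.

Lemma bern_PSeries (t : R) : 0 < t < 2 * PI -> PSeries bern_coef t = t / (1 - exp (- t)).
Proof. intros Ht. apply is_series_unique, bern_gen_series, Ht. Qed.

Definition integrand (t : R) : R := exp (- t) * PSeries bern_coef t.

Lemma integrand_continuous (t : R) : 0 <= t < 2 * PI -> continuous integrand t.
Proof.
  intros Ht. apply continuous_mult_R.
  - apply continuous_of_ex_derive. auto_derive. auto.
  - apply continuity_pt_filterlim, PSeries_continuity, bern_radius, Ht.
Qed.

Lemma integrand_integrable (y : R) : 0 <= y < 2 * PI -> ex_RInt integrand 0 y.
Proof.
  intros Hy. apply ex_RInt_of_continuous. rewrite Rmin_left, Rmax_right by lra.
  intros t Ht. apply integrand_continuous. lra.
Qed.

(* For t > 0 the integrand is t / (e^t - 1), which lies in (0, 1]. *)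
Lemma integrand_bound (t : R) : 0 <= t < 2 * PI ->
  Rabs (integrand t) <= 1 + Rabs (bern_coef 0).
Proof.
  intros Ht. unfold integrand. destruct (Req_dec t 0) as [->|Ht0].
  - rewrite PSeries_0, Ropp_0, exp_0, Rmult_1_l. lra.
  - rewrite bern_PSeries by lra.
    assert (He := exp_neg_lt_1 t ltac:(lra)). assert (Hle := exp_neg_mul_1_plus_le t).
    assert (Habs := Rabs_pos (bern_coef 0)).
    rewrite Rabs_pos_eq.
    + apply (Rle_trans _ 1); [|lra].
      apply (Rmult_le_reg_r (1 - exp (- t))); [lra|].
      replace (exp (- t) * (t / (1 - exp (- t))) * (1 - exp (- t))) with (exp (- t) * t)
        by (field; lra).
      lra.
    + apply Rmult_le_pos; [lra|]. apply Rdiv_le_0_compat; lra.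
Qed.

(* sum_n (-1)^n B_n R_n(y) = int_0^y e^{y-t} F(t) dt: each partial sum is the
   integral of e^{y-t} against a partial sum of F. *)
Lemma series_as_integral (y : R) : 0 <= y < 2 * PI ->
  is_series (fun n => (-1) ^ n * B n * Rrem n y)
    (RInt (fun t => exp (y - t) * PSeries bern_coef t) 0 y).
Proof.
  intros Hy.
  apply (is_lim_seq_ext
           (fun N => RInt (fun t => exp (y - t)
                                    * sum_f_R0 (fun n => bern_coef n * t ^ n) N) 0 y)
           _ (RInt (fun t => exp (y - t) * PSeries bern_coef t) 0 y)).
  - intro N. rewrite sum_n_Reals. apply (@is_RInt_unique R_CompleteNormedModule).
    apply (partial_sum_integral (fun n => (-1) ^ n * B n)). lra.
  - apply (RInt_partial_sums_cvg _ _ _ (exp y)); [lra | apply bern_radius, Hy | |].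
    + intros t _. apply continuous_of_ex_derive. auto_derive. auto.
    + intros t Ht. rewrite Rabs_pos_eq by (left; apply exp_pos).
      replace (y - t) with (y + - t) by ring. rewrite exp_plus.
      generalize (exp_neg_le_1 t ltac:(lra)) (exp_pos y); nra.
Qed.

(* Splitting [0, y] at e > 0: on [e, y] the integrand is G', by the closed form of F. *)
Lemma integral_split (e y : R) : 0 < e <= y -> y < 2 * PI ->
  RInt integrand 0 y = RInt integrand 0 e + (antider y - antider e).
Proof.
  intros He Hy.
  assert (Hint := integrand_integrable y ltac:(lra)).
  assert (Hint1 : ex_RInt integrand 0 e)
    by (apply (@ex_RInt_Chasles_1 R_CompleteNormedModule _ 0 e y); [lra | exact Hint]).
  assert (Hint2 : ex_RInt integrand e y)
    by (apply (@ex_RInt_Chasles_2 R_CompleteNormedModule _ 0 e y); [lra | exact Hint]).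
  assert (Hftc : RInt integrand e y = antider y - antider e).
  { apply (@is_RInt_unique R_CompleteNormedModule), is_RInt_antiderivative; [lra| |].
    - intros t Ht. unfold integrand. rewrite bern_PSeries by lra.
      replace (exp (- t) * (t / (1 - exp (- t)))) with (t * exp (- t) / (1 - exp (- t)))
        by (unfold Rdiv; ring).
      apply antider_derive. lra.
    - intros t Ht. apply integrand_continuous. lra. }
  rewrite <- Hftc. symmetry.
  exact (@RInt_Chasles R_CompleteNormedModule _ 0 e y Hint1 Hint2).
Qed.

(* int_0^y e^{-t} F(t) dt = G(y) + pi^2/6: in the splitting above let e -> 0+;
   the integral over [0, e] is at most e times the bound on the integrand, and
   G(e) -> -pi^2/6. *)
Lemma integral_evaluation (y : R) : 0 < y < 2 * PI ->
  RInt integrand 0 y = antider y + PI ^ 2 / 6.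
Proof.
  intros Hy. set (C := 1 + Rabs (bern_coef 0)).
  assert (HC : 0 < C) by (generalize (Rabs_pos (bern_coef 0)); unfold C; lra).
  apply Req_of_dist_le_all. intros d Hd.
  destruct (antider_near_0 (d / 2)) as [t0 [Ht0 Hnear]]; [lra|].
  set (e := Rmin y (Rmin t0 (d / (2 * C)))).
  assert (Hey : e <= y) by apply Rmin_l.
  assert (Het0 : e <= t0) by (eapply Rle_trans; [apply Rmin_r | apply Rmin_l]).
  assert (Hed : e <= d / (2 * C)) by (eapply Rle_trans; [apply Rmin_r | apply Rmin_r]).
  assert (He0 : 0 < e).
  { unfold e. repeat apply Rmin_glb_lt; try lra. apply Rdiv_lt_0_compat; lra. }
  assert (HeC : e * C <= d / 2).
  { apply (Rle_trans _ (d / (2 * C) * C)); [apply Rmult_le_compat_r; lra|].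
    right. field. lra. }
  assert (Hsmall : Rabs (RInt integrand 0 e) <= (e - 0) * C).
  { apply abs_RInt_le_const; [lra | apply integrand_integrable; lra |].
    intros t Ht. apply integrand_bound. lra. }
  assert (HG := Hnear e (conj He0 Het0)).
  rewrite (integral_split e y) by lra.
  replace (RInt integrand 0 e + (antider y - antider e) - (antider y + PI ^ 2 / 6))
    with (RInt integrand 0 e - (antider e + PI ^ 2 / 6)) by ring.
  eapply Rle_trans; [apply Rabs_triang|]. rewrite Rabs_Ropp. lra.
Qed.

End BernoulliGeneratingSeries.

Theorem mainTheorem7 (B : nat -> R) (hB : is_Bernoulli B) (y : R)
    (hy0 : 0 < y) (hy1 : y < 2 * PI) :
  is_series (fun n => (-1) ^ n * B n * Rrem n y)
    (exp y * (y * ln (1 - exp (- y)) - Li2 (exp (- y)) + PI ^ 2 / 6)).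
Proof.
  (* e^{y-t} = e^y e^{-t} pulls e^y out of the integral *)
  assert (Hshift : RInt (fun t => exp (y - t) * PSeries (bern_coef B) t) 0 y
                   = exp y * RInt (integrand B) 0 y).
  { change (exp y * RInt (integrand B) 0 y) with (scal (exp y) (RInt (integrand B) 0 y)).
    rewrite <- (@RInt_scal R_CompleteNormedModule)
      by (apply integrand_integrable; [exact hB | lra]).
    apply RInt_ext. intros t _. unfold integrand, scal; simpl; unfold mult; simpl.
    replace (y - t) with (y + - t) by ring. rewrite exp_plus. ring. }
  rewrite (integral_evaluation B hB y) in Hshift by lra.
  unfold antider in Hshift. rewrite <- Hshift.
  apply series_as_integral; [exact hB | lra].
Qed.
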